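(* Consider the following model. Constants $\alpha,\beta\in[0,1]$ satisfy $0<\alpha+\beta\le 1$ and $\alpha\ge\beta$. An agent has innate opinion $x_0\in[-1,1]$, and at every time $k=0,1,2,\dots$ the platform recommends the same content $u_k=u_0\in[-1,1]$. The agent chooses $\mathrm{clk}_k\in\{0,1\}$, and its opinion evolves by $$x_{k}=\begin{cases}\alpha x_0+\beta x_{k-1}+(1-\alpha-\beta)u_{k-1}, & \mathrm{clk}_{k-1}=1,\\ \frac{\alpha}{\alpha+\beta}x_0+\frac{\beta}{\alpha+\beta}x_{k-1}, & \mathrm{clk}_{k-1}=0.\end{cases}$$ Time is divided into consecutive blocks of length $s\in\mathbb{N}$, block $j\ge 0$ consisting of times $js,\dots,js+s-1$; in block $j$ the agent clicks ($\mathrm{clk}_k=1$) at times $js,\dots,js+T_j-1$ and does not click at times $js+T_j,\dots,js+s-1$, where $T_j\in\{0,1,\dots,s\}$. Let $x_i^{(p)}:=x_{is}$ denote the opinion at the beginning of block $i$ under policy $p$. Write $Z=\alpha+\beta$, $B=\frac{\beta}{\alpha+\beta}$, $\eta=\frac{\alpha}{1-\beta}$ (with the convention $0^0=1$). Let $T_0\in\mathbb{N}$, $T_0\le s$. Then for every $i\ge 1$, $$x_i^{(p)}=(1-\Upsilon_i^{(p)})x_0+\Upsilon_i^{(p)}u_0,$$ where the weights $\Upsilon_i^{(p)}$ are as follows. (1) Fixed policy ($p=1$): $T_j=T_0$ for all $j$. Then $$\Upsilon_i^{(1)}=\frac{1-(B^sZ^{T_0})^i}{1-B^sZ^{T_0}}\,(1-\eta)\,B^{s-T_0}\,(1-\beta^{T_0}).$$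 (2) Decreasing policy ($p=2$): let $\kappa>1$ and $m_D\ge 1$ be an integer such that $T_j=T_0/\kappa^j$ is a positive integer for $0\le j\le m_D-1$ and $T_j=0$ for $j\ge m_D$. Then for $1\le i\le m_D$, $$\Upsilon_i^{(2)}=(1-\eta)\,Z^{-\frac{T_0\kappa^{1-i}}{\kappa-1}}\sum_{j=0}^{i-1}B^{(j+1)s-\frac{T_0}{\kappa^{i-j-1}}}\,Z^{\frac{T_0\kappa^{1-i+j}}{\kappa-1}}\bigl(1-\beta^{\frac{T_0}{\kappa^{i-j-1}}}\bigr),$$ and for $i>m_D$, $\Upsilon_i^{(2)}=B^{(i-m_D)s}\,\Upsilon_{m_D}^{(2)}$. (3) Adaptive decreasing policy ($p=3$): let $\tau\ge 1$ be an integer and $m_{AD}\ge 1$ an integer with $T_0-(m_{AD}-1)\tau\ge 0$, such that $T_j=T_0-j\tau$ for $0\le j\le m_{AD}-1$ and $T_j=T_0-(m_{AD}-1)\tau$ for all $j\ge m_{AD}-1$. Then for $1\le i\le m_{AD}$, $$\Upsilon_i^{(3)}=(1-\eta)\sum_{j=0}^{i-1}B^{(j+1)s-T_0+(i-1-j)\tau}\,Z^{j(T_0-\tau i)+\tau\frac{j^2+j}{2}}\bigl(1-\beta^{T_0-(i-1-j)\tau}\bigr),$$ and for $i>m_{AD}$, writing $T'=T_0-(m_{AD}-1)\tau$, $$\Upsilon_i^{(3)}=\frac{1-(B^sZ^{T'})^{i-m_{AD}}}{1-B^sZ^{T'}}(1-\eta)B^{s-T'}(1-\beta^{T'})+(B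^sZ^{T'})^{i-m_{AD}}\,\Upsilon_{m_{AD}}^{(3)}.$$
   Context: This is a model of the feedback loop between a recommendation platform and an agent who decides at each step whether to consume (click on) the recommended content. The three policies are: fixed (click the first $T_0$ steps of every block), decreasing (the clicking length shrinks by a factor $\kappa$ from block to block until it becomes $0$), and adaptive decreasing (the clicking length is reduced by $\tau$ after a block whenever the opinion at the end of that block satisfies $|x-x_0|\ge x_{\text{drift}}$, and otherwise kept; the hypothesis on $T_j$ in part (3) describes a realization in which reductions happen after blocks $0,\dots,m_{AD}-2$ and never afterwards). Blocks $i\le m_D$ (resp. $i\le m_{AD}$) are called transient and later blocks steady-state. *)

From HB Require Import structures.
From mathcomp Require Import all_boot all_order all_algebra.
From mathcomp Require Import all_classical all_reals all_analysis.
Set Implicit Arguments. Unset Strict Implicit. Unset Printing Implicit Defensive.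
Import Order.TTheory GRing.Theory Num.Theory.
Local Open Scope ring_scope.

Fixpoint opinion (R : realType) (alpha beta x0 u0 : R) (clk : nat -> bool)
    (k : nat) : R :=
  match k with
  | 0 => x0
  | k'.+1 =>
      if clk k' then alpha * x0 + beta * opinion alpha beta x0 u0 clk k'
                     + (1 - alpha - beta) * u0
      else alpha / (alpha + beta) * x0
           + beta / (alpha + beta) * opinion alpha beta x0 u0 clk k'
  end.

Definition block_clk (s : nat) (T : nat -> nat) (k : nat) : bool :=
  (k %% s < T (k %/ s))%N.

Definition Zc (R : realType) (alpha beta : R) : R := alpha + beta.
Definition Bc (R : realType) (alpha beta : R) : R := beta / (alpha + beta).
Definition etac (R : realType) (alpha beta : R) : R := alpha / (1 - beta).

Definition Ups_fixed (R : realType) (alpha beta : R) (s T0 i : nat) : R :=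
  let Z := Zc alpha beta in let B := Bc alpha beta in
  (1 - (B ^+ s * Z ^+ T0) ^+ i) / (1 - B ^+ s * Z ^+ T0)
  * (1 - etac alpha beta) * B ^+ (s - T0) * (1 - beta ^+ T0).

(* Transient weight of the decreasing policy (real exponents, powR;
   powR 0 0 = 1, matching the convention 0^0 = 1). *)
Definition Ups_dec (R : realType) (alpha beta : R) (s T0 : nat) (kappa : R)
    (i : nat) : R :=
  let Z := Zc alpha beta in let B := Bc alpha beta in
  (1 - etac alpha beta)
  * Z `^ (- (T0%:R * kappa `^ (1 - i%:R) / (kappa - 1)))
  * \sum_(0 <= j < i)
      (B `^ ((j.+1)%:R * s%:R - T0%:R / kappa ^+ (i - j - 1))
       * Z `^ (T0%:R * kappa `^ (1 - i%:R + j%:R) / (kappa - 1))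
       * (1 - beta `^ (T0%:R / kappa ^+ (i - j - 1)))).

Definition Ups_ad (R : realType) (alpha beta : R) (s T0 tau i : nat) : R :=
  let Z := Zc alpha beta in let B := Bc alpha beta in
  (1 - etac alpha beta)
  * \sum_(0 <= j < i)
      (B `^ ((j.+1)%:R * s%:R - T0%:R + (i%:R - 1 - j%:R) * tau%:R)
       * Z `^ (j%:R * (T0%:R - tau%:R * i%:R)
                + tau%:R * (j%:R ^+ 2 + j%:R) / 2)
       * (1 - beta `^ (T0%:R - (i%:R - 1 - j%:R) * tau%:R))).

From HB Require Import structures.
From mathcomp Require Import all_boot all_order all_algebra.
From mathcomp Require Import all_classical all_reals all_analysis.
From mathcomp Require Import zify ring lra.
Set Implicit Arguments. Unset Strict Implicit.
Import Order.TTheory GRing.Theory Num.Theory.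
Local Open Scope ring_scope.

(* The opinion at time k is (1 - w_k) x0 + w_k u0, where the weight w_k of the
   recommendation evolves affinely: w <- b w + (1 - a - b) on a click and
   w <- B w otherwise.  Over a block with T clicks this composes to
   w <- B^s Z^T w + (1 - eta) B^(s-T) (1 - b^T), so w at the start of block i
   is the sum, over earlier blocks, of each block's gain damped by the rates
   of the blocks after it.  For the two decreasing policies the real powers
   of Z in the paper's formulas telescope to Z raised to the total clicking
   time of those later blocks; for a constant clicking length the recursion
   is a geometric series. *)

Lemma leq_of_natr_eq_divX (R : realFieldType) (x : R) (m n k : nat) :
  1 <= x -> m%:R = n%:R / x ^+ k -> (m <= n)%N.
Proof.
move=> x_ge1 eq_m; have xk_gt0 : 0 < x ^+ k by rewrite exprn_gt0 // (lt_le_trans ltr01).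
by rewrite -(ler_nat R) eq_m ler_pdivrMr // ler_peMr // exprn_ege1.
Qed.

Lemma powR_natB (R : realType) (x : R) (m n : nat) :
  0 <= x -> (m <= n)%N -> x `^ (n%:R - m%:R) = x ^+ (n - m).
Proof. by move=> x_ge0 le_mn; rewrite -natrB // powR_mulrn. Qed.

Section BlockWeights.
Variables (R : realType) (a b : R).
Hypotheses (b_ge0 : 0 <= b) (b_le_a : b <= a) (Z_gt0 : 0 < a + b) (Z_le1 : a + b <= 1).

Local Notation Z := (Zc a b).
Local Notation B := (Bc a b).
Local Notation eta := (etac a b).

Fixpoint u0_weight (clk : nat -> bool) (k : nat) : R :=
  if k is k'.+1 then
    if clk k' then b * u0_weight clk k' + (1 - a - b) else B * u0_weight clk k'
  else 0.

Lemma Zc_neq0 : Z != 0. Proof. exact: lt0r_neq0. Qed.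

Lemma Bc_ge0 : 0 <= B. Proof. by rewrite divr_ge0 // ltW. Qed.

Lemma a_gt0 : 0 < a.
Proof. by move: b_le_a Z_gt0 => ? ?; lra. Qed.

Lemma b_lt1 : b < 1.
Proof. by move: b_le_a Z_le1 => ? ?; lra. Qed.

Lemma Bc_lt1 : B < 1.
Proof. by rewrite ltr_pdivrMr // mul1r ltrDr a_gt0. Qed.

Lemma Zc_ge0 : 0 <= Z. Proof. exact: ltW. Qed.

Lemma Bc_mulZc : B * Z = b. Proof. by rewrite divfK ?Zc_neq0. Qed.

Lemma opinion_weightE x0 u0 (clk : nat -> bool) k :
  opinion a b x0 u0 clk k = (1 - u0_weight clk k) * x0 + u0_weight clk k * u0.
Proof.
elim: k => [|k IH] /=; first by ring.
rewrite IH /Bc; case: (clk k); first by ring.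
by field; rewrite Zc_neq0.
Qed.

Lemma u0_weight_clicks (clk : nat -> bool) k t :
  (forall m, (m < t)%N -> clk (k + m)%N) ->
  u0_weight clk (k + t) = b ^+ t * u0_weight clk k + (1 - eta) * (1 - b ^+ t).
Proof.
elim: t => [|t IH] clk_on; first by rewrite addn0 subrr; ring.
rewrite addnS /= clk_on // IH => [|m lt_mt]; last by apply: clk_on; lia.
have b_neq1 : 1 - b != 0 by rewrite subr_eq0 eq_sym lt_eqF ?b_lt1.
by rewrite /etac exprS; field.
Qed.

Lemma u0_weight_idle (clk : nat -> bool) k t :
  (forall m, (m < t)%N -> ~~ clk (k + m)%N) ->
  u0_weight clk (k + t) = B ^+ t * u0_weight clk k.
Proof.
elim: t => [|t IH] clk_off; first by rewrite addn0 mul1r.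
rewrite addnS /= (negbTE (clk_off _ _)) // IH => [|m lt_mt].
  by rewrite exprS mulrA.
by apply: clk_off; lia.
Qed.

Variable s : nat.
Hypothesis s_gt0 : (0 < s)%N.

Definition block_rate (t : nat) : R := B ^+ s * Z ^+ t.
Definition block_gain (t : nat) : R := (1 - eta) * B ^+ (s - t) * (1 - b ^+ t).

Lemma block_clk_offset T j m : (m < s)%N -> block_clk s T (j * s + m) = (m < T j)%N.
Proof.
by move=> lt_ms; rewrite /block_clk modnMDl divnMDl // modn_small // divn_small ?addn0.
Qed.

Lemma u0_weight_block T j : (T j <= s)%N ->
  u0_weight (block_clk s T) (j.+1 * s) =
  block_rate (T j) * u0_weight (block_clk s T) (j * s) + block_gain (T j).
Proof.
move=> Tj_le.
have -> : (j.+1 * s = j * s + T j + (s - T j))%N by rewrite mulSn; lia.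
rewrite u0_weight_idle => [|m lt_m]; last by rewrite -addnA block_clk_offset; lia.
rewrite u0_weight_clicks => [|m lt_m]; last by rewrite block_clk_offset //; lia.
have -> : block_rate (T j) = B ^+ (s - T j) * b ^+ T j.
  rewrite /block_rate -{1}(subnK Tj_le) exprD -mulrA; congr (_ * _).
  by rewrite -exprMn Bc_mulZc.
rewrite /block_gain; ring.
Qed.

Lemma block_rate_lt1 t : block_rate t < 1.
Proof.
have Bs_lt1 : B ^+ s < 1 by rewrite exprn_ilt1 ?Bc_ge0 ?Bc_lt1 -?lt0n.
have Bs_ge0 : 0 <= B ^+ s by rewrite exprn_ge0 ?Bc_ge0.
have Zt_le1 : Z ^+ t <= 1 by rewrite exprn_ile1 ?Zc_ge0.
have Zt_ge0 : 0 <= Z ^+ t by rewrite exprn_ge0 ?Zc_ge0.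
rewrite /block_rate; nra.
Qed.

Lemma Ups_fixedS t n :
  Ups_fixed a b s t n.+1 = block_rate t * Ups_fixed a b s t n + block_gain t.
Proof.
have rate_neq1 : 1 - block_rate t != 0 by rewrite subr_eq0 eq_sym lt_eqF ?block_rate_lt1.
by move: rate_neq1; rewrite /Ups_fixed /block_rate /block_gain exprS => ?; field.
Qed.

Lemma u0_weight_const_blocks T m t i :
  (t <= s)%N -> (forall j, (m <= j)%N -> T j = t) -> (m <= i)%N ->
  u0_weight (block_clk s T) (i * s) =
  Ups_fixed a b s t (i - m) + block_rate t ^+ (i - m) * u0_weight (block_clk s T) (m * s).
Proof.
move=> t_le T_tail /subnK <-; rewrite addnK; elim: (i - m)%N => [|n IH].
  by rewrite /Ups_fixed expr0 subrr !mul0r add0r mul1r.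
rewrite addSn u0_weight_block T_tail ?leq_addl // IH Ups_fixedS exprS; ring.
Qed.

(* Block [i - j - 1] contributes its gain, damped by the rates of the [j]
   blocks after it. *)
Definition Ups_blocks (T : nat -> nat) (i : nat) : R :=
  \sum_(0 <= j < i) (1 - eta) * B ^+ (j.+1 * s - T (i - j - 1)%N)
     * Z ^+ (\sum_(i - j <= l < i) T l) * (1 - b ^+ T (i - j - 1)%N).

Lemma Ups_blocksS T i : (forall l, (l <= i)%N -> (T l <= s)%N) ->
  Ups_blocks T i.+1 = block_rate (T i) * Ups_blocks T i + block_gain (T i).
Proof.
move=> T_le; rewrite /Ups_blocks big_nat_recl // big_geq ?subn0 // subn1 mul1n /=.
rewrite addrC mulr1; congr (_ + _); rewrite big_distrr.
apply: eq_big_nat => j /andP[_ lt_ji].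
rewrite subSS big_nat_recr /= ?leq_subr //.
have -> : (j.+2 * s - T (i - j - 1)%N = s + (j.+1 * s - T (i - j - 1)%N))%N.
  by have := T_le (i - j - 1)%N ltac:(lia); rewrite !mulSn; lia.
rewrite /block_rate exprD exprD; ring.
Qed.

Lemma u0_weight_Ups_blocks T i : (forall l, (l < i)%N -> (T l <= s)%N) ->
  u0_weight (block_clk s T) (i * s) = Ups_blocks T i.
Proof.
elim: i => [|i IH] T_le; first by rewrite /Ups_blocks big_geq.
rewrite u0_weight_block ?T_le // IH => [|l lt_li]; last by apply: T_le; lia.
by rewrite Ups_blocksS // => l le_li; apply: T_le.
Qed.

Lemma u0_weight_dec T0 (kappa : R) T i : 1 < kappa -> (T0 <= s)%N ->
  (forall l, (l < i)%N -> (T l)%:R = T0%:R / kappa ^+ l) ->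
  u0_weight (block_clk s T) (i * s) = Ups_dec a b s T0 kappa i.
Proof.
move=> kappa_gt1 T0_le T_eq.
have kappa_ge0 : 0 <= kappa by rewrite (le_trans ler01) ?ltW.
have kappa_neq0 : kappa != 0 by rewrite gt_eqF // (lt_trans ltr01).
have kappa1_neq0 : kappa - 1 != 0 by rewrite subr_eq0 gt_eqF.
have T_le l : (l < i)%N -> (T l <= s)%N.
  move=> lt_li; apply: leq_trans T0_le.
  exact: leq_of_natr_eq_divX (ltW kappa_gt1) (T_eq _ lt_li).
pose A (k : nat) := T0%:R * kappa `^ (1 - k%:R) / (kappa - 1).
have A_step l : A l - A l.+1 = T0%:R / kappa ^+ l.
  rewrite /A; have -> : 1 - l.+1%:R = - l%:R :> R by rewrite -natr1; ring.
  rewrite powRD ?kappa_neq0 ?implybT // powRr1 // powRN powR_mulrn //.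
  by field; rewrite kappa1_neq0 expf_neq0.
have A_telescope j : (j <= i)%N -> A (i - j)%N - A i = (\sum_(i - j <= l < i) T l)%:R.
  move=> le_ji; rewrite natr_sum (telescope_sumr_eq (fun k => - A k)) ?leq_subr //.
    by ring.
  by move=> l /andP[_ lt_li]; rewrite T_eq // -A_step; ring.
rewrite u0_weight_Ups_blocks // /Ups_dec -/(A i) mulr_sumr; apply/esym.
apply: eq_big_nat => j /andP[_ lt_ji].
have lt_i : (i - j - 1 < i)%N by lia.
have -> : 1 - i%:R + j%:R = 1 - (i - j)%:R :> R by rewrite natrB 1?ltnW //; ring.
rewrite -/(A (i - j)%N) -T_eq // -natrM powR_natB ?Bc_ge0 ?powR_mulrn //; last first.
  by apply: leq_trans (T_le _ lt_i) (leq_pmull _ _).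
have <- : Z `^ (- A i) * Z `^ (A (i - j)%N) = Z ^+ (\sum_(i - j <= l < i) T l).
  by rewrite mulrC -powRD ?Zc_neq0 ?implybT // A_telescope 1?ltnW // powR_mulrn ?Zc_ge0.
ring.
Qed.

Lemma u0_weight_ad T0 tau T i : ((i - 1) * tau <= T0)%N -> (T0 <= s)%N ->
  (forall l, (l < i)%N -> T l = (T0 - l * tau)%N) ->
  u0_weight (block_clk s T) (i * s) = Ups_ad a b s T0 tau i.
Proof.
move=> tau_le T0_le T_eq.
have T_le l : (l < i)%N -> (T l <= s)%N.
  by move=> lt_li; rewrite T_eq //; apply: leq_trans (leq_subr _ _) T0_le.
have T_real l : (l < i)%N -> (T l)%:R = T0%:R - l%:R * tau%:R :> R.
  move=> lt_li; rewrite T_eq // natrB -?natrM //.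
  by apply: leq_trans tau_le; rewrite leq_mul2r; apply/orP; right; lia.
pose Q (k : nat) : R := k%:R * T0%:R - tau%:R * (k%:R * (k%:R - 1)) / 2.
have Q_telescope j : (j <= i)%N -> Q i - Q (i - j)%N = (\sum_(i - j <= l < i) T l)%:R.
  move=> le_ji; rewrite natr_sum (telescope_sumr_eq Q) ?leq_subr // => l /andP[_ lt_li].
  by rewrite T_real // /Q -natr1; field.
rewrite u0_weight_Ups_blocks // /Ups_ad mulr_sumr; apply/esym.
apply: eq_big_nat => j /andP[_ lt_ji].
have lt_i : (i - j - 1 < i)%N by lia.
have idx : (i - j - 1)%N%:R = i%:R - 1 - j%:R :> R.
  by rewrite natrB ?subn_gt0 // natrB 1?ltnW //; ring.
have -> : j.+1%:R * s%:R - T0%:R + (i%:R - 1 - j%:R) * tau%:R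
          = (j.+1 * s)%N%:R - (T (i - j - 1)%N)%:R :> R.
  by rewrite natrM -idx T_real //; ring.
have -> : T0%:R - (i%:R - 1 - j%:R) * tau%:R = (T (i - j - 1)%N)%:R :> R.
  by rewrite -idx T_real.
have -> : j%:R * (T0%:R - tau%:R * i%:R) + tau%:R * (j%:R ^+ 2 + j%:R) / 2
          = (\sum_(i - j <= l < i) T l)%:R :> R.
  by rewrite -Q_telescope 1?ltnW // /Q natrB 1?ltnW //; field.
rewrite powR_natB ?Bc_ge0 ?powR_mulrn ?Zc_ge0 //; last first.
  by apply: leq_trans (T_le _ lt_i) (leq_pmull _ _).
ring.
Qed.

End BlockWeights.

Theorem proposition1 (R : realType) (alpha beta x0 u0 : R) (s T0 : nat) :
  0 <= alpha <= 1 -> 0 <= beta <= 1 -> 0 < alpha + beta <= 1 ->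
  beta <= alpha -> -1 <= x0 <= 1 -> -1 <= u0 <= 1 ->
  (0 < s)%N -> (T0 <= s)%N ->
  (* (1) fixed policy *)
  (forall T : nat -> nat, (forall j, T j = T0) ->
     forall i, (1 <= i)%N ->
       opinion alpha beta x0 u0 (block_clk s T) (i * s)
       = (1 - Ups_fixed alpha beta s T0 i) * x0
         + Ups_fixed alpha beta s T0 i * u0)
  /\
  (* (2) decreasing policy *)
  (forall (kappa : R) (mD : nat) (T : nat -> nat),
     1 < kappa -> (1 <= mD)%N ->
     (forall j, (j < mD)%N -> (0 < T j)%N /\ (T j)%:R = T0%:R / kappa ^+ j) ->
     (forall j, (mD <= j)%N -> T j = 0%N) ->
     (forall i, (1 <= i <= mD)%N ->
        opinion alpha beta x0 u0 (block_clk s T) (i * s)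
        = (1 - Ups_dec alpha beta s T0 kappa i) * x0
          + Ups_dec alpha beta s T0 kappa i * u0)
     /\
     (forall i, (mD < i)%N ->
        let Y := Bc alpha beta ^+ ((i - mD) * s) * Ups_dec alpha beta s T0 kappa mD in
        opinion alpha beta x0 u0 (block_clk s T) (i * s)
        = (1 - Y) * x0 + Y * u0))
  /\
  (* (3) adaptive decreasing policy *)
  (forall (tau mAD : nat) (T : nat -> nat),
     (1 <= tau)%N -> (1 <= mAD)%N -> ((mAD - 1) * tau <= T0)%N ->
     (forall j, (j <= mAD - 1)%N -> T j = (T0 - j * tau)%N) ->
     (forall j, (mAD - 1 <= j)%N -> T j = (T0 - (mAD - 1) * tau)%N) ->
     (forall i, (1 <= i <= mAD)%N ->
        opinion alpha beta x0 u0 (block_clk s T) (i * s)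
        = (1 - Ups_ad alpha beta s T0 tau i) * x0
          + Ups_ad alpha beta s T0 tau i * u0)
     /\
     (forall i, (mAD < i)%N ->
        let Tp := (T0 - (mAD - 1) * tau)%N in
        let Y := Ups_fixed alpha beta s Tp (i - mAD)
                 + (Bc alpha beta ^+ s * Zc alpha beta ^+ Tp) ^+ (i - mAD)
                   * Ups_ad alpha beta s T0 tau mAD in
        opinion alpha beta x0 u0 (block_clk s T) (i * s)
        = (1 - Y) * x0 + Y * u0)).
Proof.
move=> _ /andP[b_ge0 _] /andP[Z_gt0 Z_le1] b_le_a _ _ s_gt0 T0_le.
have const_blocks := u0_weight_const_blocks b_ge0 b_le_a Z_gt0 Z_le1 s_gt0.
split; [|split].
- move=> T T_eq i _; rewrite opinion_weightE // (const_blocks T 0 T0) //.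
  by rewrite mul0n [u0_weight _ _ _ 0]/= mulr0 addr0 subn0.
- move=> kappa mD T kappa_gt1 _ T_pos T_tail.
  have dec_transient i : (i <= mD)%N ->
      u0_weight alpha beta (block_clk s T) (i * s) = Ups_dec alpha beta s T0 kappa i.
    by move=> le_i; apply: u0_weight_dec => // l lt_l; case: (T_pos l _); first lia.
  split=> [i /andP[_ le_i] | i lt_i Y]; rewrite opinion_weightE //.
    by rewrite dec_transient.
  rewrite (const_blocks T mD 0 i (leq0n s) T_tail (ltnW lt_i)) dec_transient //.
  by rewrite /Y /Ups_fixed /block_rate !expr0 subrr !mulr0 add0r mulr1 mulnC exprM.
- move=> tau mAD T _ _ tau_le T_trans T_tail.
  have ad_transient i : (i <= mAD)%N ->
      u0_weight alpha beta (block_clk s T) (i * s) = Ups_ad alpha beta s T0 tau i.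
    move=> le_i; apply: u0_weight_ad => // [|l lt_l]; last by apply: T_trans; lia.
    by apply: leq_trans tau_le; rewrite leq_mul2r leq_sub2r ?orbT.
  split=> [i /andP[_ le_i] | i lt_i Tp Y]; rewrite opinion_weightE //.
    by rewrite ad_transient.
  have Tp_le : (Tp <= s)%N by apply: leq_trans (leq_subr _ _) T0_le.
  have T_steady j : (mAD <= j)%N -> T j = Tp by move=> le_j; apply: T_tail; lia.
  by rewrite (const_blocks T mAD Tp i Tp_le T_steady (ltnW lt_i)) ad_transient.
Qed.
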